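(* Let $X\subset\mathbb{R}^N$ and $Y\subset\mathbb{R}^M$ be nondegenerate closed sets and $f:X\to Y$ a homeomorphism. If $p$ is a local cut-point of $X$, then $f(p)$ is a local cut-point of $Y$.
   Context: For a closed set $X\subset\mathbb{R}^N$, $x_0\in X$ and $r>0$, let $C_X(x_0,r)$ denote the connected component of $\overline{B}(x_0,r)\cap X$ containing $x_0$. A point $x_0\in X$ is a local cut-point of $X$ if there exists $r>0$ such that $C_X(x_0,r)\setminus\{x_0\}$ is not connected. *)

(* R^N is modelled as 'rV[R]_N (product topology =
   Euclidean topology); balls are the closed Euclidean balls, written out. *)
From HB Require Import structures.
From mathcomp Require Import all_boot all_order all_algebra.
From mathcomp Require Import all_classical all_reals all_analysis.
Set Implicit Arguments. Unset Strict Implicit. Unset Printing Implicit Defensive.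
Import Order.TTheory GRing.Theory Num.Theory.
Import numFieldNormedType.Exports.
Local Open Scope classical_set_scope.
Local Open Scope ring_scope.

Definition cball_eucl {R : realType} {N : nat} (x0 : 'rV[R]_N) (r : R)
  : set 'rV[R]_N :=
  [set y | Num.sqrt (\sum_(i < N) (y ord0 i - x0 ord0 i) ^+ 2) <= r].

Definition CX {R : realType} {N : nat} (X : set 'rV[R]_N) (x0 : 'rV[R]_N)
  (r : R) : set 'rV[R]_N :=
  connected_component (cball_eucl x0 r `&` X) x0.

Definition local_cut_point {R : realType} {N : nat} (X : set 'rV[R]_N)
  (x0 : 'rV[R]_N) : Prop :=
  X x0 /\ exists r : R, 0 < r /\ ~ connected (CX X x0 r `\ x0).

Definition nondegenerate_set {T : Type} (X : set T) : Prop :=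
  exists x y, X x /\ X y /\ x <> y.

(* f : X -> Y is a homeomorphism (f given as a map on the ambient space,
   only its restriction to X matters). *)
Definition homeomorphism_on {T U : topologicalType} (X : set T) (Y : set U)
  (f : T -> U) : Prop :=
  [/\ f @` X = Y, {within X, continuous f} &
      exists g : U -> T,
        [/\ g @` Y `<=` X, {within Y, continuous g},
            {in X, cancel f g} & {in Y, cancel g f}]].

From mathcomp Require Import all_boot all_order all_algebra.
From mathcomp Require Import all_classical all_reals all_analysis.
Import Order.TTheory GRing.Theory Num.Theory.
Import numFieldNormedType.Exports.
Local Open Scope classical_set_scope.
Local Open Scope ring_scope.
Set Implicit Arguments.
Unset Strict Implicit.
Unset Printing Implicit Defensive.

(* Let C = C_X(p, r) with C \ p = E0 u E1 split into separated pieces.  Each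
   E_i u {p} is a continuum, hence so is its image K_i under f.  Choose s so
   that g maps C_Y(f p, s) into C.  Either K_i lies in the open s-ball around
   f p, or, by boundary bumping, the quasi-component of f p in K_i cut down to
   the closed ball (connected, as K_i is compact Hausdorff) leaves the open
   ball; either way K_i meets C_Y(f p, s) \ f p.  So the connected set
   g (C_Y(f p, s) \ f p) lies in E0 u E1 and meets both pieces: impossible. *)

Section separated_halves.
Context {T : topologicalType}.
Implicit Types (A B C : set T) (p : T).

Lemma separated_setU1_connected C A B p : connected C -> C p ->
  C `\ p = A `|` B -> separated A B -> connected (A `|` [set p]).
Proof.
move=> Ccon Cp CAB [clAB AclB]; apply/connectedP => G [G0 AG sG].
wlog Gp : G G0 AG sG / G false p.
  move=> wlogG; have : (A `|` [set p]) p by right.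
  rewrite AG => -[|Gp]; first exact: wlogG.
  by apply: (wlogG (G \o negb)) => //;
    [case=> /=|rewrite AG setUC|rewrite separatedC].
have AC : A `<=` C by move=> x Ax; have [] : (C `\ p) x by rewrite CAB; left.
have BC : B `<=` C by move=> x Bx; have [] : (C `\ p) x by rewrite CAB; right.
have G1A : G true `<=` A.
  move=> x G1x; have : (A `|` [set p]) x by rewrite AG; right.
  case=> // xp; rewrite xp in G1x.
  by have : (G false `&` G true) p by []; rewrite (separated_disjoint sG).
have G0C : G false `<=` C.
  move=> x G0x; have : (A `|` [set p]) x by rewrite AG; left.
  by case=> [/AC|->].
apply/connectedPn: Ccon.
exists (fun b => if b then G true else G false `|` B); split.
- by case; [exact: G0 | exists p; left].
- apply/seteqP; split=> [x Cx|x [[/G0C|/BC]|/G1A/AC]] //.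
  have [->|xp] := pselect (x = p); first by left; left.
  have : (A `|` B) x by rewrite -CAB.
  case=> [Ax|]; last by left; right.
  have : (A `|` [set p]) x by left.
  by rewrite AG => -[]; [left; left|right].
- split; rewrite ?closureU setIUl.
  + rewrite sG.1 set0U setIC.
    exact: subsetI_eq0 G1A (@subset_refl _ _) AclB.
  + rewrite sG.2 set0U setIC.
    exact: subsetI_eq0 (closureS G1A) (@subset_refl _ _) clAB.
Qed.

Lemma separated_setU1_closed C A B p : closed C -> closed [set p] ->
  C `\ p = A `|` B -> separated A B -> closed (A `|` [set p]).
Proof.
move=> Ccl pcl CAB [clAB _] x.
rewrite closureU => -[clAx|/pcl ->]; last by right.
have AC : A `<=` C by move=> y Ay; have [] : (C `\ p) y by rewrite CAB; left.
have [->|xp] := pselect (x = p); first by right.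
have : (A `|` B) x by rewrite -CAB; split => //; exact/Ccl/(closureS AC).
case=> [|Bx]; first by left.
by have : (closure A `&` B) x by []; rewrite clAB.
Qed.

Lemma separated_closedU_closed A B :
  closed (A `|` B) -> separated A B -> closed A.
Proof.
move=> ABcl [clAB _] x clAx.
have [//|Bx] : (A `|` B) x by exact/ABcl/(closureS (@subsetUl _ A B)).
by have : (closure A `&` B) x by []; rewrite clAB.
Qed.

End separated_halves.

Section quasi_component.
Context {T : topologicalType}.
Implicit Types (A B E F K S W : set T) (q : T).

Definition rel_clopen F W :=
  (exists2 U, open U & W = F `&` U) /\ (exists2 C, closed C & W = F `&` C).

Definition quasi_component F q :=
  [set x | forall W, rel_clopen F W -> W q -> W x].

Lemma rel_clopenT F : rel_clopen F F.
Proof.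
by split; [exists setT; [exact: openT|] | exists setT; [exact: closedT|]];
  rewrite setIT.
Qed.

Lemma rel_clopenI F W1 W2 :
  rel_clopen F W1 -> rel_clopen F W2 -> rel_clopen F (W1 `&` W2).
Proof.
move=> [[U1 oU1 W1U] [C1 cC1 W1C]] [[U2 oU2 W2U] [C2 cC2 W2C]]; split.
- by exists (U1 `&` U2); [exact: openI | rewrite W1U W2U setIACA setIid].
- by exists (C1 `&` C2); [exact: closedI | rewrite W1C W2C setIACA setIid].
Qed.

Lemma rel_clopen_sub F W : rel_clopen F W -> W `<=` F.
Proof. by move=> [[U _ ->] _] x []. Qed.

Lemma quasi_component_sub F q : F q -> quasi_component F q `<=` F.
Proof. by move=> Fq x /(_ F (rel_clopenT F)); apply. Qed.

Lemma quasi_component_refl F q : quasi_component F q q.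
Proof. by []. Qed.

Lemma closed_quasi_component F q : closed F -> closed (quasi_component F q).
Proof.
move=> Fcl.
have -> : quasi_component F q =
    \bigcap_(W in [set W | rel_clopen F W /\ W q]) W.
  apply/seteqP; split=> x Qx W; first by case; exact: Qx.
  by move=> cW Wq; exact: Qx.
by apply: closed_bigI => W [[_ [C Ccl ->]] _]; exact: closedI.
Qed.

Lemma rel_clopen_avoid_compact F S q : compact S -> S `<=` F -> F q ->
    S `&` quasi_component F q = set0 ->
  exists W, [/\ rel_clopen F W, W q & W `&` S = set0].
Proof.
move=> Scpt SF Fq SQ; apply: contrapT => noW.
pose G := filter_from [set W | rel_clopen F W /\ W q] (fun W => W `&` S).
have Gproper : ProperFilter G.
  apply: filter_from_proper; last first.
    by move=> W [cW Wq]; apply/set0P/eqP => WS; apply: noW; exists W.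
  apply: filter_from_filter; first by exists F; split; [exact: rel_clopenT|].
  move=> W1 W2 [cW1 W1q] [cW2 W2q]; exists (W1 `&` W2).
    by split; [exact: rel_clopenI|].
  by move=> x [[? ?] ?].
have GS : G S by exists F; [split; [exact: rel_clopenT|] | move=> x []].
have [y [Sy clGy]] := Scpt G Gproper GS.
have /existsNP[W /not_implyP[cW /not_implyP[Wq nWy]]] :
    ~ quasi_component F q y.
  by move=> Qy; have : (S `&` quasi_component F q) y by []; rewrite SQ.
have [_ [C Ccl WC]] := cW.
have nCy : ~ C y by move=> Cy; apply: nWy; rewrite WC; split => //; exact: SF.
have GWS : G (W `&` S) by exists W.
have nCy_nbhs : nbhs y (~` C).
  by apply: open_nbhs_nbhs; split => //; exact: closed_openC.
have [x [[Wx _] nCx]] := clGy _ _ GWS nCy_nbhs.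
by apply: nCx; move: Wx; rewrite WC => -[].
Qed.

(* The library's [normal_openP] carries a spurious [realType] parameter. *)
Lemma normal_open_separation : normal_space T -> forall A B,
  closed A -> closed B -> A `&` B = set0 ->
  exists U V, [/\ open U, open V, A `<=` U, B `<=` V & U `&` V = set0].
Proof.
move=> normalT A B Acl Bcl AB.
have : set_nbhs A (~` B).
  apply/set_nbhsP; exists (~` B).
  by split; [exact: closed_openC | exact/disjoints_subset |].
case/(normalT A Acl) => N /set_nbhsP[U [oU AU UN]] clNB.
exists U, (~` closure U); split => //.
- exact/closed_openC/closed_closure.
- by move=> x Bx /(closureS UN) /clNB.
- by apply/disjoints_subset => x Ux /(_ (subset_closure Ux)).
Qed.

Lemma boundary_bumping K E W q : compact K -> connected K -> K q ->
    closed E -> E q -> open W -> W `<=` E -> ~ K `<=` W ->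
  exists2 z, quasi_component (K `&` E) q z & ~ W z.
Proof.
move=> Kcpt Kcon Kq Ecl Eq oW WE KW; apply: contrapT => noz.
have QW : quasi_component (K `&` E) q `<=` W.
  by move=> z Qz; apply: contrapT => nWz; apply: noz; exists z.
have [V [cV Vq VS]] : exists V,
    [/\ rel_clopen (K `&` E) V, V q & V `&` ((K `&` E) `&` ~` W) = set0].
  apply: rel_clopen_avoid_compact => //.
  - by apply: compact_closedI; [exact: compact_closedI | exact: open_closedC].
  - by apply/seteqP; split=> x // [[_ nWx] /QW].
have VW : V `<=` W.
  move=> x Vx; apply: contrapT => nWx.
  have : (V `&` ((K `&` E) `&` ~` W)) x.
    by split; [|split; [exact: rel_clopen_sub cV _ Vx|]].
  by rewrite VS.
have [[U oU VU] [C Ccl VC]] := cV.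
have VK : V = K.
  apply: Kcon; first by exists q.
  - exists (U `&` W); first exact: openI.
    apply/seteqP; split=> [x Vx|x [Kx [Ux /WE Ex]]]; last by rewrite VU.
    have := Vx; rewrite VU => -[[Kx _] Ux].
    by split => //; split => //; exact: VW.
  - by exists (E `&` C); [exact: closedI | rewrite VC setIA].
by apply: KW; rewrite -VK.
Qed.

Hypothesis hausT : hausdorff_space T.
Hypothesis normalT : normal_space T.

Lemma quasi_component_closed_split F q A B : compact F -> F q ->
    closed A -> closed B -> A `&` B = set0 ->
  quasi_component F q = A `|` B -> A q -> B = set0.
Proof.
move=> Fcpt Fq Acl Bcl AB QAB Aq.
have [U [V [oU oV AU BV UV]]] := normal_open_separation normalT Acl Bcl AB.
have [W [cW Wq WS]] : exists W,
    [/\ rel_clopen F W, W q & W `&` (F `&` ~` (U `|` V)) = set0].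
  apply: rel_clopen_avoid_compact => //.
  - by apply: compact_closedI => //; exact/open_closedC/openU.
  - rewrite QAB; apply/seteqP; split=> x // [[_ nUVx]].
    by case=> [/AU|/BV] ?; apply: nUVx; [left|right].
have WUV : W `&` U = W `&` ~` V.
  apply/seteqP; split=> x [Wx].
    by move=> Ux; split=> // Vx; have : (U `&` V) x by []; rewrite UV.
  move=> nVx; split => //; apply: contrapT => nUx.
  have : (W `&` (F `&` ~` (U `|` V))) x.
    by split; [|split; [exact: rel_clopen_sub cW _ Wx | case]].
  by rewrite WS.
have cWU : rel_clopen F (W `&` U).
  have [[G oG WG] [C Ccl WC]] := cW; split.
  - by exists (G `&` U); [exact: openI | rewrite WG setIA].
  - exists (C `&` ~` V); first by apply: closedI => //; exact: open_closedC.
    by rewrite WUV WC setIA.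
have QU : quasi_component F q `<=` U.
  by move=> x Qx; have [] := Qx _ cWU (conj Wq (AU _ Aq)).
apply/seteqP; split=> x // Bx.
have : (U `&` V) x by split; [apply: QU; rewrite QAB; right | exact: BV].
by rewrite UV.
Qed.

Lemma quasi_component_connected F q : compact F -> F q ->
  connected (quasi_component F q).
Proof.
move=> Fcpt Fq; apply/connectedP => E [E0 QE sE].
wlog Eq : E E0 QE sE / E false q.
  move=> wlogE; have : quasi_component F q q by [].
  rewrite QE => -[|Eq]; first exact: wlogE.
  by apply: (wlogE (E \o negb)) => //;
    [case=> /=|rewrite QE setUC|rewrite separatedC].
have Qcl : closed (quasi_component F q).
  by apply: closed_quasi_component; exact: compact_closed.
have E0cl : closed (E false) by apply: separated_closedU_closed sE; rewrite -QE.
have E1cl : closed (E true).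
  by apply: (separated_closedU_closed (B := E false));
    [rewrite setUC -QE | rewrite separatedC].
have [x E1x] := E0 true.
have E10 := quasi_component_closed_split Fcpt Fq E0cl E1cl
  (separated_disjoint sE) QE Eq.
by rewrite E10 in E1x.
Qed.

End quasi_component.

Section euclidean_ball.
Variables (R : realType) (n : nat).
Implicit Types (x y : 'rV[R]_n) (r s : R).

(* The argument order makes [cball_eucl x r] convertible to
   [[set y | eucl_dist x y <= r]]. *)
Definition eucl_dist x y : R :=
  Num.sqrt (\sum_(i < n) (y ord0 i - x ord0 i) ^+ 2).

Lemma eucl_distxx x : eucl_dist x x = 0.
Proof. by rewrite /eucl_dist big1 ?sqrtr0 // => i _; rewrite subrr expr0n. Qed.

Lemma ler_coord_eucl_dist x y i : `|y ord0 i - x ord0 i| <= eucl_dist x y.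
Proof.
rewrite /eucl_dist -sqrtr_sqr; apply: ler_wsqrtr.
by rewrite (bigD1 i) //= lerDl; apply: sumr_ge0 => j _; exact: sqr_ge0.
Qed.

Lemma continuous_eucl_dist x : continuous (eucl_dist x).
Proof.
move=> y; apply: (@continuous_comp _ _ _
  (fun y : 'rV[R]_n => \sum_(i < n) (y ord0 i - x ord0 i) ^+ 2) Num.sqrt);
  last exact: sqrt_continuous.
apply: (continuous_big (op := +%R)); first exact: add_continuous.
move=> i _ z; apply: (@continuous_comp _ _ _
  (fun y : 'rV[R]_n => y ord0 i - x ord0 i) (fun t : R => t ^+ 2));
  last exact: exprn_continuous.
apply: (@cvgB _ _ _ (nbhs z)); last exact: cvg_cst.
exact: (@coord_continuous R 1 n ord0 i z).
Qed.

Lemma closed_cball_eucl x r : closed (cball_eucl x r).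
Proof.
apply: (@preimage_closed _ _ (eucl_dist x) [set t | t <= r]).
  by move=> y _; exact: continuous_eucl_dist.
exact: closed_le.
Qed.

Lemma open_eucl_dist_lt x s : open [set y | eucl_dist x y < s].
Proof.
apply: (@open_comp _ _ (eucl_dist x) [set t | t < s]).
  by move=> y _; exact: continuous_eucl_dist.
exact: open_lt.
Qed.

Lemma compact_cball_eucl x r : compact (cball_eucl x r).
Proof.
pose box := [set v : 'rV[R]_n |
  forall i, (`[x ord0 i - r, x ord0 i + r]%classic) (v ord0 i)].
have box_cpt : compact box.
  apply: (@rV_compact _ _ (fun i => `[x ord0 i - r, x ord0 i + r]%classic)).
  by move=> i; exact: segment_compact.
suff ball_box : cball_eucl x r `<=` box.
  exact: subclosed_compact (@closed_cball_eucl x r) box_cpt ball_box.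
move=> y xy i /=; rewrite in_itv /= -ler_distlC distrC.
exact: le_trans (ler_coord_eucl_dist _ _ _) xy.
Qed.

Lemma cball_eucl_center x r : 0 <= r -> cball_eucl x r x.
Proof. by rewrite /cball_eucl /= -/(eucl_dist x x) eucl_distxx. Qed.

Lemma nbhs_cball_eucl x (P : set 'rV[R]_n) : nbhs x P ->
  exists2 s, 0 < s & cball_eucl x s `<=` P.
Proof.
move=> /nbhs_ballP[e /= e0 eP]; exists (e / 2); first by rewrite divr_gt0.
move=> y xy; apply: eP; rewrite mx_norm_ball /ball_ /=.
apply: (@le_lt_trans _ _ (e / 2)).
  rewrite -[`|_|]/(mx_norm (x - y)) mx_normrE.
  apply: bigmax_le; first exact/ltW/divr_gt0.
  move=> [a b] _ /=; rewrite !mxE (ord1 a) distrC.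
  exact: le_trans (ler_coord_eucl_dist _ _ _) xy.
by rewrite ltr_pdivrMr // ltr_pMr // ltr1n.
Qed.

End euclidean_ball.

Section euclidean_components.
Variables (R : realType) (n : nat).
Implicit Types (X Y K : set 'rV[R]_n) (x q : 'rV[R]_n) (r s : R).

Lemma CX_center X x r : X x -> 0 <= r -> CX X x r x.
Proof.
by move=> Xx r0; apply: connected_component_refl; split => //;
  exact: cball_eucl_center.
Qed.

Lemma compact_CX X x r : closed X -> compact (CX X x r).
Proof.
move=> Xcl; have CXcl : closed (CX X x r).
  by apply: component_closed; apply: closedI => //; exact: closed_cball_eucl.
suff CX_ball : CX X x r `<=` cball_eucl x r.
  exact: subclosed_compact CXcl (@compact_cball_eucl R n x r) CX_ball.
by move=> y /connected_component_sub[].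
Qed.

Lemma compact_connected_meets_CX Y K q s : 0 < s ->
    compact K -> connected K -> K `<=` Y -> K q -> (exists2 z, K z & z <> q) ->
  exists2 z, K z & (CX Y q s `\ q) z.
Proof.
move=> s0 Kcpt Kcon KY Kq [z0 Kz0 z0q].
pose W := [set y | eucl_dist q y < s].
have Wq : W q by rewrite /W /= eucl_distxx.
have WE : W `<=` cball_eucl q s by move=> y /ltW.
have [KW|KW] := pselect (K `<=` W).
  exists z0 => //; split => //.
  apply: (connected_component_max Kq _ Kcon) Kz0 => y Ky.
  by split; [exact/WE/KW | exact: KY].
have [z Qz nWz] := boundary_bumping Kcpt Kcon Kq (@closed_cball_eucl R n q s)
  (WE q Wq) (@open_eucl_dist_lt R n q s) WE KW.
have KEq : (K `&` cball_eucl q s) q by split; [|exact: WE].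
have QKE := quasi_component_sub KEq.
have Qcon : connected (quasi_component (K `&` cball_eucl q s) q).
  apply: quasi_component_connected => //; first exact: pseudometric_normal.
  exact: compact_closedI Kcpt (@closed_cball_eucl R n q s).
exists z; first exact: (QKE z Qz).1.
split; last by move=> zq; apply: nWz; rewrite zq.
apply: (connected_component_max _ _ Qcon) Qz.
  exact: quasi_component_refl.
by move=> y /QKE[Ky Ey]; split => //; exact: KY.
Qed.

End euclidean_components.

Section homeomorphism.
Variables (R : realType) (N M : nat).
Variables (X : set 'rV[R]_N) (Y : set 'rV[R]_M).
Variables (f : 'rV[R]_N -> 'rV[R]_M) (g : 'rV[R]_M -> 'rV[R]_N).
Hypotheses (closedX : closed X) (fXY : f @` X = Y).
Hypotheses (fC : {within X, continuous f}) (gC : {within Y, continuous g}).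
Hypotheses (gYX : g @` Y `<=` X) (fK : {in X, cancel f g}).

Lemma image_CX_sub p r : X p -> 0 < r ->
  exists2 s, 0 < s & g @` CX Y (f p) s `<=` CX X p r.
Proof.
move=> Xp r0; have Yfp : Y (f p) by rewrite -fXY; exists p.
have gfp : g (f p) = p by exact: fK (mem_set Xp).
have [s s0 sr] : exists2 s, 0 < s &
    cball_eucl (f p) s `<=` [set y | Y y -> cball_eucl p r (g y)].
  apply: nbhs_cball_eucl.
  have /subspace_continuousP/(_ (f p) Yfp) := gC.
  rewrite /from_subspace gfp => /(_ (cball_eucl p r)); apply.
  apply: (@filterS _ _ _ [set y | eucl_dist p y < r]); first by move=> y /ltW.
  apply: open_nbhs_nbhs; split; first exact: open_eucl_dist_lt.
  by rewrite /= eucl_distxx.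
exists s => //; apply: connected_component_max.
- by exists (f p) => //; apply: CX_center Yfp (ltW s0).
- move=> _ [y /connected_component_sub[fps Yy] <-].
  by split; [exact: sr | apply: gYX; exists y].
- apply: connected_continuous_connected; first exact: component_connected.
  by apply: continuous_subspaceW gC => y /connected_component_sub[].
Qed.

Lemma separated_half_meets_CX p r s A B : X p -> 0 <= r -> 0 < s ->
    CX X p r `\ p = A `|` B -> separated A B -> A !=set0 ->
  exists2 x, A x & (CX Y (f p) s `\ f p) (f x).
Proof.
move=> Xp r0 s0 CAB sAB [a Aa].
have AC : A `<=` CX X p r `\ p by move=> x Ax; rewrite CAB; left.
have ApC : A `|` [set p] `<=` CX X p r.
  by move=> x [/AC[]|->]; last exact: CX_center.
have ApX : A `|` [set p] `<=` X by move=> x /ApC/connected_component_sub[].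
have Ap_con : connected (A `|` [set p]).
  apply: separated_setU1_connected CAB sAB; first exact: component_connected.
  exact: CX_center.
have Ap_cpt : compact (A `|` [set p]).
  suff Ap_cl : closed (A `|` [set p]).
    exact: subclosed_compact Ap_cl (compact_CX closedX) ApC.
  apply: separated_setU1_closed CAB sAB.
  - by apply: component_closed; apply: closedI => //; exact: closed_cball_eucl.
  - exact/accessible_closed_set1/hausdorff_accessible/norm_hausdorff.
have fApC : {within A `|` [set p], continuous f}.
  exact: continuous_subspaceW ApX fC.
have fAp : forall x, A x -> f x <> f p.
  move=> x Ax; have Xx := ApX x (or_introl Ax).
  by move=> /(can_in_inj fK (mem_set Xx) (mem_set Xp)) xp; case: (AC x Ax).
have [_ [x Apx <-] CYfx] : exists2 z, (f @` (A `|` [set p])) z &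
    (CX Y (f p) s `\ f p) z.
  apply: compact_connected_meets_CX s0 _ _ _ _ _.
  - exact: continuous_compact fApC Ap_cpt.
  - exact: connected_continuous_connected Ap_con fApC.
  - by move=> _ [x /ApX Xx <-]; rewrite -fXY; exists x.
  - by exists p; first right.
  - by exists (f a); [exists a; first left | exact: fAp].
case: Apx => [Ax|xp]; first by exists x.
by move: CYfx; rewrite xp => -[_ []].
Qed.

End homeomorphism.

Unset Implicit Arguments.

Theorem lemma2p7 (R : realType) (N M : nat)
  (X : set 'rV[R]_N) (Y : set 'rV[R]_M) (f : 'rV[R]_N -> 'rV[R]_M)
  (p : 'rV[R]_N) :
  closed X -> closed Y -> nondegenerate_set X -> nondegenerate_set Y ->
  homeomorphism_on X Y f ->
  local_cut_point X p -> local_cut_point Y (f p).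
Proof.
move=> closedX _ _ _ [fXY fC [g [gYX gC fK gK]]].
move=> [Xp [r [r0 /connectedPn[E [E0 CE sE]]]]].
have [s s0 gCY] := image_CX_sub fXY gC gYX fK Xp r0.
split; first by rewrite -fXY; exists p.
exists s; split => // CYcon; set CY := CX Y (f p) s `\ f p.
have EX b x : E b x -> X x.
  move=> Ebx; have [/connected_component_sub[] //] : (CX X p r `\ p) x.
  by rewrite CE; case: b Ebx; [right|left].
have meets b : E b `&` g @` CY !=set0.
  have [x Ebx CYfx] : exists2 x, E b x & CY (f x).
    have half := separated_half_meets_CX closedX fXY fC fK Xp (ltW r0) s0.
    case: b (E0 b) => E0b; last exact: half CE sE E0b.
    by apply: half _ _ E0b; [rewrite CE setUC | rewrite separatedC].
  by exists x; split => //; exists (f x) => //; apply/fK/mem_set/(EX b).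
have gCY_E : g @` CY `<=` E false `|` E true.
  move=> _ [y [CYy yfp] <-]; rewrite -CE; split; first by apply: gCY; exists y.
  move=> gyp; apply: yfp; rewrite -gyp gK //.
  exact/mem_set/(connected_component_sub CYy).2.
have gCY_con : connected (g @` CY).
  apply: connected_continuous_connected CYcon _.
  by apply: continuous_subspaceW gC => y [/connected_component_sub[]].
have dE := separated_disjoint sE.
have [gE|gE] := connected_subset sE gCY_E gCY_con.
- have [x [E1x /gE E0x]] := meets true.
  by have : (E false `&` E true) x by []; rewrite dE.
- have [x [E0x /gE E1x]] := meets false.
  by have : (E false `&` E true) x by []; rewrite dE.
Qed.
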